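(* Let $n\ge 1$, $V=(\mathbb F_2)^n$, let $r\ge 1$ and let $\rho_1,\dots,\rho_r\in\mathrm{Sym}(V)$. Let $\Phi$ be the $r$-round long-key Feistel network whose encryption functions are \[ E_{(k_1,\dots,k_r)}=\bar\rho_1\sigma_{(0,k_1)}\bar\rho_2\sigma_{(0,k_2)}\cdots\bar\rho_r\sigma_{(0,k_r)},\qquad (k_1,\dots,k_r)\in V^r, \] and let $\Gamma(\Phi)=\langle E_{(k_1,\dots,k_r)}\mid (k_1,\dots,k_r)\in V^r\rangle\le \mathrm{Sym}(V\times V)$. Then \[ \langle \bar\rho_1\bar\rho_2\cdots\bar\rho_r,\ T(V\times V)\rangle \le \Gamma(\Phi). \] In particular $T(V\times V)\le\Gamma(\Phi)$.
   Context: Maps act on the right ($x\mapsto xf$) and products of maps are composed left to right ($fg$ means first $f$, then $g$); $+$ is bitwise XOR on $V$. For $\rho\in\mathrm{Sym}(V)$, the Feistel operator induced by $\rho$ is the map $\bar\rho: V\times V\to V\times V$, $(x_1,x_2)\bar\rho=(x_2,\ x_1+x_2\rho)$. For $(h,k)\in V\times V$, $\sigma_{(h,k)}:V\times V\to V\times V$ is defined by $(x_1,x_2)\sigma_{(h,k)}=(x_1+k,\ x_2+h)$, and $T(V\times V)=\{\sigma_{(h,k)}\mid (h,k)\in V\times V\}$. *)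

From HB Require Import structures.
From mathcomp Require Import all_boot all_order all_algebra all_fingroup.
Set Implicit Arguments. Unset Strict Implicit. Unset Printing Implicit Defensive.
Import GRing.Theory.

Definition V (n : nat) := 'rV['F_2]_n.

Section Feistel.
Variable n : nat.
Local Open Scope ring_scope.

Definition feistel_fun (rho : {perm V n}) (x : V n * V n) : V n * V n :=
  (x.2, x.1 + rho x.2).

Lemma feistel_fun_inj rho : injective (feistel_fun rho).
Proof.
move=> [a b] [c d] [/= Ebd Eac]; rewrite Ebd in Eac.
by rewrite (addIr _ Eac) Ebd.
Qed.

Definition feistel (rho : {perm V n}) : {perm V n * V n} :=
  perm (@feistel_fun_inj rho).

(* Translation sigma_(h,k): (x1,x2) |-> (x1 + k, x2 + h). *)
Definition sigma_fun (hk : V n * V n) (x : V n * V n) : V n * V n :=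
  (x.1 + hk.2, x.2 + hk.1).

Lemma sigma_fun_inj hk : injective (sigma_fun hk).
Proof. by move=> [a b] [c d] [/= /addIr -> /addIr ->]. Qed.

Definition sigma (hk : V n * V n) : {perm V n * V n} := perm (@sigma_fun_inj hk).

Definition transl_group : {set {perm V n * V n}} := [set sigma hk | hk : V n * V n].

(* Encryption function E_(k_1..k_r) = rhobar_1 sigma_(0,k_1) ... rhobar_r sigma_(0,k_r);
   mathcomp permutation product s * t means "first s, then t". *)
Definition encrypt (r : nat) (rho : 'I_r -> {perm V n}) (k : {ffun 'I_r -> V n})
  : {perm V n * V n} :=
  (\prod_(i < r) (feistel (rho i) * sigma (0, k i)))%g.

Definition Gamma (r : nat) (rho : 'I_r -> {perm V n}) : {set {perm V n * V n}} :=
  <<[set encrypt rho k | k : {ffun 'I_r -> V n}]>>%g.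

End Feistel.

From mathcomp Require Import all_boot all_order all_algebra all_fingroup.
Import GRing.Theory.

Set Implicit Arguments.
Unset Strict Implicit.
Unset Printing Implicit Defensive.

(* With the all-zero key the cipher is P := rhobar_1 ... rhobar_r,
   so P is in Gamma.  Putting the key h into the last round only gives
   P sigma_(0,h), hence sigma_(0,h) is in Gamma.  Since
   sigma_(0,h) rhobar = rhobar sigma_(h,0), putting h into the penultimate round
   gives P sigma_(h,0) (for r = 1 one conjugates sigma_(0,h) by P = rhobar_1
   instead).  These two families generate T(V x V). *)

Section Translations.
Variable n : nat.
Local Open Scope ring_scope.

Lemma sigma0 : sigma 0 = (1 : {perm V n * V n})%g.
Proof. by apply/permP => -[x y]; rewrite permE perm1 /sigma_fun /= !addr0. Qed.

Lemma sigmaD (a b : V n * V n) : sigma (a + b) = (sigma a * sigma b)%g.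
Proof. by apply/permP => -[x y]; rewrite permM !permE /sigma_fun /= !addrA. Qed.

Lemma sigma_feistel (rho : {perm V n}) (h : V n) :
  (sigma (0, h) * feistel rho)%g = (feistel rho * sigma (h, 0))%g.
Proof.
apply/permP => -[x y]; rewrite !permM !permE /sigma_fun /feistel_fun /=.
by rewrite !addr0 addrAC.
Qed.

End Translations.

Section Encryption.
Variable n : nat.
Local Open Scope group_scope.

Definition round_key (r m : nat) (h : V n) : {ffun 'I_r -> V n} :=
  [ffun i => if val i == m then h else 0%R].

Lemma encrypt_in_Gamma r (rho : 'I_r -> {perm V n}) k : encrypt rho k \in Gamma rho.
Proof. exact/mem_gen/imset_f. Qed.

Lemma prod_feistel_zero_keys r (rho : 'I_r -> {perm V n}) (k : 'I_r -> V n) :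
  (forall i, k i = 0%R) ->
  \prod_(i < r) (feistel (rho i) * sigma (0%R, k i)) = \prod_(i < r) feistel (rho i).
Proof. by move=> k0; apply: eq_bigr => i _; rewrite k0 sigma0 mulg1. Qed.

Lemma encrypt0 r (rho : 'I_r -> {perm V n}) :
  encrypt rho 0%R = \prod_(i < r) feistel (rho i).
Proof. by apply: prod_feistel_zero_keys => i; rewrite ffunE. Qed.

Lemma encrypt_last_key r (rho : 'I_r.+1 -> {perm V n}) h :
  encrypt rho (round_key r.+1 r h) = \prod_(i < r.+1) feistel (rho i) * sigma (0%R, h).
Proof.
rewrite /encrypt !big_ord_recr /= ffunE eqxx -mulgA.
congr (_ * _); apply: prod_feistel_zero_keys => i.
by rewrite ffunE (ltn_eqF (ltn_ord i)).
Qed.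

Lemma encrypt_penultimate_key r (rho : 'I_r.+2 -> {perm V n}) h :
  encrypt rho (round_key r.+2 r h) = \prod_(i < r.+2) feistel (rho i) * sigma (h, 0%R).
Proof.
rewrite /encrypt !big_ord_recr /= !ffunE /= eqxx gtn_eqF // sigma0 mulg1.
rewrite -!mulgA sigma_feistel; congr (_ * _).
apply: prod_feistel_zero_keys => i.
by rewrite ffunE (ltn_eqF (ltn_ord i)).
Qed.

Lemma prod_feistel_in_Gamma r (rho : 'I_r -> {perm V n}) :
  \prod_(i < r) feistel (rho i) \in Gamma rho.
Proof. by rewrite -encrypt0 encrypt_in_Gamma. Qed.

Lemma sigma_0h_in_Gamma r (rho : 'I_r.+1 -> {perm V n}) h :
  sigma (0%R, h) \in Gamma rho.
Proof.
by rewrite -(groupMl _ (prod_feistel_in_Gamma rho)) -encrypt_last_key encrypt_in_Gamma.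
Qed.

Lemma sigma_h0_in_Gamma r (rho : 'I_r.+1 -> {perm V n}) h :
  sigma (h, 0%R) \in Gamma rho.
Proof.
case: r rho => [|r] rho; last first.
  by rewrite -(groupMl _ (prod_feistel_in_Gamma rho)) -encrypt_penultimate_key encrypt_in_Gamma.
have -> : sigma (h, 0%R) = sigma (0%R, h) ^ \prod_(i < 1) feistel (rho i).
  by rewrite conjgE big_ord1 sigma_feistel mulKg.
by rewrite groupJ ?sigma_0h_in_Gamma ?prod_feistel_in_Gamma.
Qed.

Lemma transl_group_sub_Gamma r (rho : 'I_r.+1 -> {perm V n}) :
  transl_group n \subset Gamma rho.
Proof.
apply/subsetP => _ /imsetP[[h k] _ ->].
have -> : (h, k) = ((h, 0) + (0, k))%R.
  by congr pair; rewrite /= (addr0, add0r).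
by rewrite sigmaD groupM ?sigma_h0_in_Gamma ?sigma_0h_in_Gamma.
Qed.

End Encryption.

Theorem lemma4p1 (n : nat) (hn : 0 < n) (r : nat) (hr : 0 < r)
  (rho : 'I_r -> {perm V n}) :
  (<<(\prod_(i < r) feistel (rho i)) |: transl_group n>> \subset Gamma rho)%g
  /\ (transl_group n \subset Gamma rho)%g.
Proof.
case: r hr rho => // r _ rho.
have transl_sub := transl_group_sub_Gamma rho.
split=> //.
by rewrite gen_subG subUset sub1set prod_feistel_in_Gamma transl_sub.
Qed.
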